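(* Let $\mathcal F\subset 2^{[n]}$, let $i\in[n]$, and let $\mathcal G=S_i(\mathcal F)$. Then for every positive integer $r$, $$\max\{|W(F_1,\ldots,F_r)|: F_1,\ldots,F_r\in\mathcal F\}\ \ge\ \max\{|W(G_1,\ldots,G_r)|: G_1,\ldots,G_r\in\mathcal G\}.$$
   Context: For sets $A_1,\ldots,A_r\subset[n]$, $W(A_1,\ldots,A_r)=(A_1\cup\cdots\cup A_r)\setminus(A_1\cap\cdots\cap A_r)$. For $\mathcal F\subset 2^{[n]}$ and $i\in[n]$, let $\mathcal F(i)=\{F\setminus\{i\}: i\in F\in\mathcal F\}$ and $\mathcal F(\bar i)=\{F\in\mathcal F: i\notin F\}$, both subfamilies of $2^{[n]\setminus\{i\}}$; a family $\mathcal G\subset 2^{[n]}$ is uniquely determined by $\mathcal G(i)$ and $\mathcal G(\bar i)$. The squashed family $S_i(\mathcal F)$ is the unique family $\mathcal G\subset 2^{[n]}$ with $\mathcal G(i)=\mathcal F(i)\cap\mathcal F(\bar i)$ and $\mathcal G(\bar i)=\mathcal F(i)\cup\mathcal F(\bar i)$. In the maxima the $r$ sets need not be distinct. *)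

From mathcomp Require Import all_boot.
Set Implicit Arguments. Unset Strict Implicit. Unset Printing Implicit Defensive.

Definition W (n r : nat) (A : {ffun 'I_r -> {set 'I_n}}) : {set 'I_n} :=
  (\bigcup_(j < r) A j) :\: (\bigcap_(j < r) A j).

Definition sec_in (n : nat) (F : {set {set 'I_n}}) (i : 'I_n) : {set {set 'I_n}} :=
  [set A :\ i | A in F & i \in A].

Definition sec_out (n : nat) (F : {set {set 'I_n}}) (i : 'I_n) : {set {set 'I_n}} :=
  [set A in F | i \notin A].

Definition squash (n : nat) (i : 'I_n) (F : {set {set 'I_n}}) : {set {set 'I_n}} :=
  [set A : {set 'I_n} |
    if i \in A then (A :\ i) \in sec_in F i :&: sec_out F i
    else A \in sec_in F i :|: sec_out F i].

(* max{ |W(F_1..F_r)| : F_1..F_r in F } (0 if F is empty) *)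
Definition maxW (n r : nat) (F : {set {set 'I_n}}) : nat :=
  \max_(A : {ffun 'I_r -> {set 'I_n}} | [forall j, A j \in F]) #|W A|.

From mathcomp Require Import all_boot.

Set Implicit Arguments.
Unset Strict Implicit.
Unset Printing Implicit Defensive.

(* W(A) \ {i} only depends on the traces A_j \ {i}, and every member G of
   S_i(F) has such a trace in F: G itself or G + i.  Replacing each G_j by a
   member of F with the same trace therefore preserves W(G) \ {i}.  If i lies
   in W(G), some G_a contains i, and then both G_a and G_a - i are in F; one
   of them can be chosen to disagree on i with another replacement, which
   keeps i in W. *)

Lemma in_W n r (A : {ffun 'I_r -> {set 'I_n}}) x :
  (x \in W A) = [exists j, x \in A j] && [exists j, x \notin A j].
Proof.
rewrite /W inE andbC -negb_forall; congr (_ && ~~ _).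
- by apply/bigcupP/existsP => [[j _ xA]|[j xA]]; exists j.
- by apply/bigcapP/forallP => xA j //; apply: xA.
Qed.

Lemma W_setD1 n r (A B : {ffun 'I_r -> {set 'I_n}}) i :
  (forall j, A j :\ i = B j :\ i) -> W A :\ i = W B :\ i.
Proof.
move=> eqAB; apply/setP => x; rewrite !in_setD1; have [//|/= xi] := eqVneq x i.
have eqx j : (x \in A j) = (x \in B j).
  by move/setP/(_ x): (eqAB j); rewrite !in_setD1 xi.
by rewrite !in_W (eq_existsb eqx) (eq_existsb (fun j => congr1 negb (eqx j))).
Qed.

Lemma card_W_le n r (A B : {ffun 'I_r -> {set 'I_n}}) i :
  W A :\ i = W B :\ i -> (i \in W A -> i \in W B) -> #|W A| <= #|W B|.
Proof.
move=> eqAB iAB; rewrite (cardsD1 i (W A)) (cardsD1 i (W B)) eqAB leq_add2r.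
by case: (i \in W A) iAB => // ->.
Qed.

Lemma leq_maxW n r (F : {set {set 'I_n}}) (A : {ffun 'I_r -> {set 'I_n}}) :
  (forall j, A j \in F) -> #|W A| <= maxW r F.
Proof. by move=> AF; apply: leq_bigmax_cond; apply/forallP. Qed.

Section Squash.

Variables (n : nat) (F : {set {set 'I_n}}) (i : 'I_n).

Lemma mem_sec_in B : (B \in sec_in F i) = (i \notin B) && (i |: B \in F).
Proof.
apply/imsetP/andP => [[A]|[iB iBF]].
  by rewrite inE => /andP [AF iA] ->; rewrite setD11 setD1K.
exists (i |: B); last by rewrite setU1K.
by rewrite inE iBF setU11.
Qed.

Lemma squash_mem_both A : A \in squash i F -> i \in A -> A \in F /\ A :\ i \in F.
Proof.
rewrite inE => + iA; rewrite iA !inE mem_sec_in setD1K // => /andP [/andP [_ AF]].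
by case/andP.
Qed.

Lemma squash_trace A : A \in squash i F -> exists2 B, B \in F & B :\ i = A :\ i.
Proof.
case: (boolP (i \in A)) => [iA /squash_mem_both/(_ iA) [AF _]|iA]; first by exists A.
rewrite inE (negbTE iA) !inE mem_sec_in iA andbT => /orP [iAF|AF]; last by exists A.
by exists (i |: A); rewrite // setDUl setDv set0U.
Qed.

Variables (r : nat) (G : {ffun 'I_r -> {set 'I_n}}).
Hypothesis G_squash : forall j, G j \in squash i F.

Lemma squash_traces :
  exists2 c : {ffun 'I_r -> {set 'I_n}}, forall j, c j \in F & forall j, c j :\ i = G j :\ i.
Proof.
have /fin_all_exists [c cP] j : exists A, A \in F /\ A :\ i = G j :\ i.
  by have [A AF trA] := squash_trace (G_squash j); exists A.
by exists [ffun j => c j] => j; rewrite ffunE; case: (cP j).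
Qed.

Lemma squash_lift_W :
  exists c : {ffun 'I_r -> {set 'I_n}},
    [/\ forall j, c j \in F, W c :\ i = W G :\ i & i \in W G -> i \in W c].
Proof.
have [c cF trc] := squash_traces.
have [iWG|_] := boolP (i \in W G); last by exists c; split=> //; apply: W_setD1.
move: iWG; rewrite in_W => /andP [/existsP [a iGa] /existsP [b iGb]].
have [GaF GaiF] := squash_mem_both (G_squash a) iGa.
have ba : b != a by apply: contraNneq iGb => ->.
pose d := [ffun j => if j == a then (if i \in c b then G a :\ i else G a) else c j].
have db : d b = c b by rewrite ffunE (negbTE ba).
have da : d a = if i \in c b then G a :\ i else G a by rewrite ffunE eqxx.
exists d; split.
- move=> j; rewrite ffunE; case: eqP => _ //; by case: ifP.
- apply: W_setD1 => j; rewrite ffunE; case: eqP => [->|_]; last exact: trc.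
  by case: ifP => _; rewrite // setDDl setUid.
- move=> _; rewrite in_W; apply/andP.
  have [icb|icb] := boolP (i \in c b); split; apply/existsP.
  + by exists b; rewrite db.
  + by exists a; rewrite da icb setD11.
  + by exists a; rewrite da (negbTE icb).
  + by exists b; rewrite db.
Qed.

End Squash.

Theorem lemma1 (n : nat) (F : {set {set 'I_n}}) (i : 'I_n) (r : nat) :
  0 < r -> maxW r (squash i F) <= maxW r F.
Proof.
move=> _; apply/bigmax_leqP => G /forallP G_squash.
have [c [cF trW iW]] := squash_lift_W G_squash.
exact: leq_trans (card_W_le (esym trW) iW) (leq_maxW cF).
Qed.
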